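(* Let $N_1$ be a lattice, $M_1=\mathrm{Hom}(N_1,\mathbb Z)$, and let $(\sigma,\sigma^0)$ be a stacky fan in $N_{1,\mathbb R}$ whose fan consists of a simplicial cone $\sigma$ with $\dim\sigma=\mathrm{rk}N_1$ and its faces. Then the $(\sigma,\sigma^0)$-free resolution of $\sigma^\vee\cap M_1$ is given by the natural inclusion $$\sigma^\vee\cap M_1\to\{m\in M_1\otimes_{\mathbb Z}\mathbb Q:\langle m,n\rangle\in\mathbb Z_{\ge0}\text{ for all }n\in\sigma^0\}.$$
   Context: A stacky fan $(\Sigma,\Sigma^0)$ in $N_{\mathbb R}$: $\Sigma$ a finite simplicial fan, $\Sigma^0\subset|\Sigma|\cap N$ such that for each cone $\tau$, $\tau\cap\Sigma^0$ is a submonoid of $\tau\cap N$ isomorphic to $\mathbb N^{\dim\tau}$ and every element of $\tau\cap N$ has a positive multiple in it. For a ray $\rho$ with first nonzero lattice point $\zeta_\rho$, the level $n_\rho$ is the integer with $n_\rho\zeta_\rho$ the first nonzero point of $\rho\cap\Sigma^0$. A submonoid $S\subset P$ is close to $P$ if every element of $P$ has a positive multiple in $S$. For $P=\sigma^\vee\cap M_1$ (sharp, simplicially toric, of rank $d$), the minimal free resolution is the injective homomorphism $r:P\to F\cong\mathbb N^d$ with $r(P)$ close to $F$ such that every injective $j:P\to G\cong\mathbb N^d$ with close image factors uniquely as $j=\phi\circ r$. Each irreducible element $e$ of $F$ corresponds to the unique ray $\rho$ of $\sigma$ such that $\langle m,\zeta_\rho\rangle>0$ for $m\in P$ with $r(m)$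 a positive multiple of $e$; write $e_\rho$. The $(\sigma,\sigma^0)$-free resolution of $P$ is $t\circ r:P\to F$, where $t:F\to F$, $e_\rho\mapsto n_\rho e_\rho$. The claim means the displayed target is a free monoid of rank $d$ and the inclusion is isomorphic (under $P$) to $t\circ r$. *)

(* Lattice N_1 = Z^d (row vectors 'rV[int]_d), M_1 = Z^d with
   the standard pairing, M_1 (x) Q = 'rV[rat]_d. *)
From HB Require Import structures.
From mathcomp Require Import all_boot all_order all_algebra.
Set Implicit Arguments. Unset Strict Implicit. Unset Printing Implicit Defensive.
Import Order.TTheory GRing.Theory Num.Theory.

Section StackyDefs.
Variable d : nat.

Definition toQ (v : 'rV[int]_d) : 'rV[rat]_d := map_mx (fun z : int => (z%:~R : rat)) v.

Definition pairQ (m v : 'rV[rat]_d) : rat := (\sum_(i < d) m ord0 i * v ord0 i)%R.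

(* The simplicial cone sigma is generated by the rows zeta_i = row i Z of Z.
   in_face Z S v : v lies in the face tau_S = cone(zeta_i, i in S). *)
Definition in_face (Z : 'M[int]_d) (S : {set 'I_d}) (v : 'rV[rat]_d) : Prop :=
  exists a : 'I_d -> rat, (forall i, (0 <= a i)%R) /\ (forall i, i \notin S -> a i = 0%R) /\
    v = (\sum_(i < d) a i *: toQ (row i Z))%R.

Definition lattice_face (Z : 'M[int]_d) (S : {set 'I_d}) (v : 'rV[int]_d) : Prop :=
  in_face Z S (toQ v).

(* sigma simplicial of dimension d = rk N_1: its d generators are linearly independent *)
Definition simplicial_full (Z : 'M[int]_d) : Prop :=
  row_free (map_mx (fun z : int => (z%:~R : rat)) Z).

Definition first_lattice_pt (z : 'rV[int]_d) : Prop :=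
  z != 0%R /\ forall q : rat, (0 < q)%R ->
    (exists w : 'rV[int]_d, toQ w = (q *: toQ z)%R) -> (1 <= q)%R.

Definition free_monoid_iso (k : nat) (A : 'rV[int]_d -> Prop) : Prop :=
  exists f : ('I_k -> nat) -> 'rV[int]_d,
    (forall x y, f (fun i => (x i + y i)%N) = (f x + f y)%R) /\ injective f /\
    (forall v, A v <-> exists x, f x = v).

(* (sigma, S0) is a stacky fan, the fan being sigma and all its faces tau_S *)
Definition stacky_cone (Z : 'M[int]_d) (S0 : 'rV[int]_d -> Prop) : Prop :=
  (forall v, S0 v -> lattice_face Z setT v) /\
  forall S : {set 'I_d},
    let A := fun v => lattice_face Z S v /\ S0 v in
    A 0%R /\ (forall u v, A u -> A v -> A (u + v)%R) /\
    free_monoid_iso #|S| A /\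
    (forall v, lattice_face Z S v -> exists k : nat, (0 < k)%N /\ S0 (v *+ k)%R).

Definition is_level (Z : 'M[int]_d) (S0 : 'rV[int]_d -> Prop) (n : 'I_d -> nat) : Prop :=
  forall i, (0 < n i)%N /\ S0 (row i Z *+ n i)%R /\
    forall k, (0 < k)%N -> (k < n i)%N -> ~ S0 (row i Z *+ k)%R.

Definition dual_lattice (Z : 'M[int]_d) (m : 'rV[int]_d) : Prop :=
  forall v, in_face Z setT v -> (0 <= pairQ (toQ m) v)%R.

(* F = N^d as functions 'I_d -> nat *)
Definition hom_on (P : 'rV[int]_d -> Prop) (f : 'rV[int]_d -> 'I_d -> nat) : Prop :=
  (forall i, f 0%R i = 0%N) /\
  forall p q, P p -> P q -> forall i, f (p + q)%R i = (f p i + f q i)%N.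

Definition inj_on (P : 'rV[int]_d -> Prop) (f : 'rV[int]_d -> 'I_d -> nat) : Prop :=
  forall p q, P p -> P q -> (forall i, f p i = f q i) -> p = q.

Definition close_on (P : 'rV[int]_d -> Prop) (f : 'rV[int]_d -> 'I_d -> nat) : Prop :=
  forall x : 'I_d -> nat, exists k : nat, (0 < k)%N /\
    exists p, P p /\ forall i, f p i = (k * x i)%N.

Definition nat_hom (phi : ('I_d -> nat) -> 'I_d -> nat) : Prop :=
  (forall i, phi (fun _ => 0%N) i = 0%N) /\
  forall x y i, phi (fun k => (x k + y k)%N) i = (phi x i + phi y i)%N.

Definition min_free_res (P : 'rV[int]_d -> Prop) (r : 'rV[int]_d -> 'I_d -> nat) : Prop :=
  hom_on P r /\ inj_on P r /\ close_on P r /\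
  forall j, hom_on P j -> inj_on P j -> close_on P j ->
    exists phi, nat_hom phi /\ (forall p, P p -> forall i, j p i = phi (r p) i) /\
      forall psi, nat_hom psi -> (forall p, P p -> forall i, j p i = psi (r p) i) ->
        forall x i, psi x i = phi x i.

Definition ray_prop (Z : 'M[int]_d) (P : 'rV[int]_d -> Prop) (r : 'rV[int]_d -> 'I_d -> nat)
  (i j : 'I_d) : Prop :=
  forall m, P m -> forall k : nat, (0 < k)%N -> (forall l, r m l = (k * (l == i))%N) ->
    (0 < pairQ (toQ m) (toQ (row j Z)))%R.

Definition corr_ray Z P r (i j : 'I_d) : Prop :=
  ray_prop Z P r i j /\ forall j', ray_prop Z P r i j' -> j' = j.

Definition target (S0 : 'rV[int]_d -> Prop) (m : 'rV[rat]_d) : Prop :=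
  forall v, S0 v -> exists z : nat, pairQ m (toQ v) = (z%:R)%R.

End StackyDefs.

(* Write zeta_j for the rows of Z.  The evaluation p |-> (<p, zeta_j>)_j embeds
   P = sigma^vee cap M_1 into N^d with close image, so by universality it is r
   followed by a monoid map N^d -> N^d.  Closeness forces that map to be monomial,
   i.e. a permutation of the coordinates with positive scalars; since P - P is the
   whole lattice, primitivity of each zeta_j forces the scalars to be 1, and the
   permutation is the ray correspondence rho.  Dually, the free generators of
   sigma^0 must lie one on each ray, and the levels make them exactly n_j zeta_j.
   Hence the target is {m | <m, n_j zeta_j> in N for all j}, which
   m |-> (<m, n_j zeta_j>)_j identifies with N^d, and on P this map is t o r. *)

From HB Require Import structures.
From mathcomp Require Import all_boot all_order all_algebra perm lra.
From Stdlib Require Import FunctionalExtensionality.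
Set Implicit Arguments. Unset Strict Implicit. Unset Printing Implicit Defensive.
Import Order.TTheory GRing.Theory Num.Theory.
Local Open Scope ring_scope.

Local Notation ratmx Z := (map_mx (fun z : int => z%:~R : rat) Z).

Lemma additive_natfunE (V : nmodType) K (f : ('I_K -> nat) -> V) :
  f (fun _ => 0%N) = 0 -> (forall x y, f (fun i => x i + y i)%N = f x + f y) ->
  forall x, f x = \sum_k f (fun l => (l == k : nat)) *+ x k.
Proof.
move=> f0 fD x; pose addf (x y : 'I_K -> nat) i := (x i + y i)%N.
have fMn y c : f (fun l => c * y l)%N = f y *+ c.
  elim: c => [|c IHc]; first by rewrite mulr0n -f0.
  by rewrite mulrS -IHc -fD; congr f; apply: functional_extensionality => l; rewrite mulSn.
have xE : x = \big[addf/fun _ => 0%N]_k (fun l => x k * (l == k))%N.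
  apply: functional_extensionality => l.
  rewrite (big_morph (fun y => y l) (id1 := 0%N) (op1 := addn)) //.
  by rewrite (bigD1 l) //= eqxx muln1 big1 ?addn0 // => k /negbTE kl; rewrite eq_sym kl muln0.
by rewrite {1}xE (big_morph f fD f0); apply: eq_bigr => k _; rewrite -fMn.
Qed.

Lemma perm_of_private_support d (P : rel 'I_d) :
  (forall j, exists k, P j k && [forall l, P l k ==> (l == j)]) ->
  exists s : {perm 'I_d}, forall j k, P j k = (k == s j).
Proof.
move=> private; pose kappa j := odflt j [pick k | P j k && [forall l, P l k ==> (l == j)]].
have kappaP j : P j (kappa j) && [forall l, P l (kappa j) ==> (l == j)].
  rewrite /kappa; case: pickP => [k //|none] /=.
  by have [k Hk] := private j; rewrite none in Hk.
have kappa_only j l : P l (kappa j) -> l = j.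
  by move=> Plk; have /andP[_ /forallP/(_ l)/implyP/(_ Plk)/eqP] := kappaP j.
have kappa_inj : injective kappa.
  by move=> j1 j2 E; apply: kappa_only; rewrite -E; case/andP: (kappaP j1).
exists (perm kappa_inj) => j k; rewrite permE.
apply/idP/eqP => [Pjk|->]; last by case/andP: (kappaP j).
have [kinv _ kinvK] := injF_bij kappa_inj.
by rewrite -(kinvK k) in Pjk *; rewrite (kappa_only _ _ Pjk).
Qed.

Lemma monomial_of_nonneg_cone (R : numDomainType) d (a : 'I_d -> 'I_d -> R) :
  (forall j k, 0 <= a j k) ->
  (forall j, exists x : 'I_d -> R, exists2 c, 0 < c &
     (forall k, 0 <= x k) /\ forall l, \sum_k x k * a l k = c * (l == j)%:R) ->
  exists s : {perm 'I_d}, forall j k, (a j k != 0) = (k == s j).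
Proof.
move=> a_ge0 hits; apply: perm_of_private_support => j.
have [x [c c_gt0 [x_ge0 xa]]] := hits j.
have xa_ge0 l k : 0 <= x k * a l k by rewrite mulr_ge0.
have [k xajk] : exists k, x k * a j k != 0.
  apply/existsP; apply: contraTT c_gt0 => /existsPn xa0.
  have := xa j; rewrite eqxx mulr1 big1 => [<-|k _]; last exact/eqP/negPn/xa0.
  by rewrite ltxx.
move: xajk; rewrite mulf_eq0 negb_or => /andP[xk0 ajk0].
exists k; rewrite ajk0 /=; apply/forallP => l; apply/implyP => alk0.
apply: contraTT alk0 => lj; rewrite negbK.
have := xa l; rewrite (negbTE lj) mulr0.
move=> /(psumr_eq0P (fun k _ => xa_ge0 l k))/(_ k isT)/eqP.
by rewrite mulf_eq0 (negbTE xk0).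
Qed.

Section Lattice.
Variable d : nat.
Implicit Types (u v w z : 'rV[int]_d) (m x : 'rV[rat]_d).

Lemma toQ_is_zmod_morphism : zmod_morphism (@toQ d).
Proof. by move=> u v; apply/matrixP => i j; rewrite !mxE rmorphB. Qed.

HB.instance Definition _ :=
  GRing.isZmodMorphism.Build _ _ (@toQ d) toQ_is_zmod_morphism.

Lemma toQ_inj : injective (@toQ d).
Proof.
move=> u v /matrixP uv; apply/matrixP => i j.
by have := uv i j; rewrite !mxE => /intr_inj.
Qed.

Lemma toQMn u k : toQ (u *+ k) = k%:R *: toQ u.
Proof. by rewrite raddfMn scaler_nat. Qed.

Lemma pairQE m x : pairQ m x = (m *m x^T) 0 0.
Proof. by rewrite mxE; apply: eq_bigr => i _; rewrite mxE. Qed.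

Lemma pairQ0l x : pairQ 0 x = 0.
Proof. by rewrite pairQE mul0mx mxE. Qed.

Lemma pairQDl m1 m2 x : pairQ (m1 + m2) x = pairQ m1 x + pairQ m2 x.
Proof. by rewrite !pairQE mulmxDl mxE. Qed.

Lemma pairQBl m1 m2 x : pairQ (m1 - m2) x = pairQ m1 x - pairQ m2 x.
Proof. by rewrite !pairQE mulmxBl !mxE. Qed.

Lemma pairQZl a m x : pairQ (a *: m) x = a * pairQ m x.
Proof. by rewrite !pairQE -scalemxAl mxE. Qed.

Lemma pairQ_sumr (I : finType) m (c : I -> rat) (F : I -> 'rV[rat]_d) :
  pairQ m (\sum_i c i *: F i) = \sum_i c i * pairQ m (F i).
Proof.
rewrite pairQE linear_sum mulmx_sumr summxE; apply: eq_bigr => i _.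
by rewrite linearZ -scalemxAr mxE pairQE.
Qed.

Lemma pairQZr a m x : pairQ m (a *: x) = a * pairQ m x.
Proof. by rewrite !pairQE linearZ -scalemxAr mxE. Qed.

Lemma pairQ_lattice_int u v : pairQ (toQ u) (toQ v) \is a Num.int.
Proof. by apply: rpred_sum => i _; rewrite !mxE rpredM ?intr_int. Qed.

Lemma pairQ_delta i m : pairQ (toQ (delta_mx 0 i)) m = m 0 i.
Proof.
rewrite /pairQ (bigD1 i) //= big1 ?addr0 => [|k ki]; first by rewrite !mxE !eqxx mul1r.
by rewrite !mxE (negbTE ki) andbF mul0r.
Qed.

Lemma lattice_of_int_coords x : (forall i, x 0 i \is a Num.int) -> exists w, toQ w = x.
Proof.
move=> x_int; exists (\row_i Num.floor (x 0 i)); apply/matrixP => a i.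
by rewrite (ord1 a) !mxE floorK.
Qed.

Lemma lattice_of_int_pairing x :
  (forall u, pairQ (toQ u) x \is a Num.int) -> exists w, toQ w = x.
Proof. by move=> x_int; apply: lattice_of_int_coords => i; rewrite -pairQ_delta. Qed.

Lemma lattice_multiple x : exists2 k : nat, (0 < k)%N & exists u, toQ u = k%:R *: x.
Proof.
pose k := (\prod_i `|denq (x 0%R i)|)%N.
exists k; first by rewrite prodn_gt0 // => i; rewrite absz_gt0 denq_neq0.
apply: lattice_of_int_coords => i; rewrite mxE natr_prod (bigD1 i) //= mulrAC.
have den_int j : (`|denq (x 0 j)|%:R : rat) = (denq (x 0 j))%:~R.
  by rewrite natr_absz normr_denq.
rewrite rpredM ?rpred_prod // => [|j _]; last by rewrite den_int intr_int.
by rewrite den_int mulrC -numqE intr_int.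
Qed.

Lemma first_lattice_pt_nat z w (b : rat) :
  first_lattice_pt z -> 0 < b -> toQ w = b *: toQ z -> b \is a Num.nat.
Proof.
move=> [_ z_first] b_gt0 wE; rewrite natrEtruncn; set t := Num.truncn b.
have /andP[tb bt] := truncn_itv (ltW b_gt0).
rewrite eq_le tb /=; rewrite leNgt; apply/negP => t_lt_b.
have : 1 <= b - t%:R.
  apply: z_first; first by rewrite subr_gt0.
  by exists (w - z *+ t); rewrite raddfB /= toQMn wE scalerBl.
by rewrite lerBrDr addrC natr1 leNgt bt.
Qed.
End Lattice.

Section Cone.
Variables (d : nat) (Z : 'M[int]_d).
Hypothesis Zfree : simplicial_full Z.
Local Notation P := (dual_lattice Z).
Implicit Types (p q u v : 'rV[int]_d) (m x : 'rV[rat]_d).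

Lemma toQ_row j : toQ (row j Z) = row j (ratmx Z).
Proof. exact: map_row. Qed.

Lemma pairQ_rowE m j : pairQ m (row j (ratmx Z)) = (m *m (ratmx Z)^T) 0 j.
Proof. by rewrite pairQE !mxE; apply: eq_bigr => i _; rewrite !mxE. Qed.

Lemma ratmx_tr_unit : (ratmx Z)^T \in unitmx.
Proof. by rewrite unitmx_tr -row_free_unit. Qed.

Lemma pairQ_rows_inj m1 m2 :
  (forall j, pairQ m1 (row j (ratmx Z)) = pairQ m2 (row j (ratmx Z))) -> m1 = m2.
Proof.
move=> eq12; apply: (can_inj (mulmxK ratmx_tr_unit)).
by apply/rowP => j; rewrite -!pairQ_rowE.
Qed.

Lemma pairQ_rows_surj (c : 'I_d -> rat) :
  exists m, forall j, pairQ m (row j (ratmx Z)) = c j.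
Proof.
exists (\row_j c j *m invmx (ratmx Z)^T) => j.
by rewrite pairQ_rowE mulmxKV ?ratmx_tr_unit // mxE.
Qed.

Definition ray_coord x l : rat := (x *m invmx (ratmx Z)) 0 l.

Lemma ray_coordK x : x = \sum_l ray_coord x l *: row l (ratmx Z).
Proof. by rewrite -mulmx_sum_row mulmxKV // -row_free_unit. Qed.

Lemma ray_coord_sum (a : 'I_d -> rat) l :
  ray_coord (\sum_k a k *: row k (ratmx Z)) l = a l.
Proof.
have -> : \sum_k a k *: row k (ratmx Z) = \row_k a k *m ratmx Z.
  by rewrite mulmx_sum_row; apply: eq_bigr => k _; rewrite mxE.
by rewrite /ray_coord mulmxK -?row_free_unit // mxE.
Qed.

Lemma ray_coord_lin (I : finType) (c : I -> rat) (F : I -> 'rV[rat]_d) l :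
  ray_coord (\sum_k c k *: F k) l = \sum_k c k * ray_coord (F k) l.
Proof.
rewrite /ray_coord mulmx_suml summxE; apply: eq_bigr => k _.
by rewrite -scalemxAl mxE.
Qed.

Lemma ray_coord_row j l : ray_coord (row j (ratmx Z)) l = (l == j)%:R.
Proof. by rewrite /ray_coord rowE mulmxK -?row_free_unit // mxE eqxx eq_sym. Qed.

Lemma ray_coordZ c x l : ray_coord (c *: x) l = c * ray_coord x l.
Proof. by rewrite /ray_coord -scalemxAl mxE. Qed.

Lemma in_face_ray_coord x : in_face Z setT x -> forall l, 0 <= ray_coord x l.
Proof.
move=> [a [a_ge0 [_ ->]]] l.
by rewrite (eq_bigr _ (fun k _ => congr1 _ (toQ_row k))) ray_coord_sum.
Qed.

Lemma row_in_face j : lattice_face Z setT (row j Z).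
Proof.
exists (fun i => (i == j)%:R); split=> [i|]; first exact: ler0n.
split=> [i|]; first by rewrite in_setT.
rewrite (bigD1 j) //= eqxx scale1r big1 ?addr0 // => i /negbTE ->.
by rewrite scale0r.
Qed.

Lemma dualP p : P p <-> forall j, 0 <= pairQ (toQ p) (row j (ratmx Z)).
Proof.
split=> [Pp j|pair_ge0 _ [a [a_ge0 [_ ->]]]].
  by rewrite -toQ_row; apply/Pp/row_in_face.
by rewrite pairQ_sumr sumr_ge0 // => i _; rewrite toQ_row mulr_ge0.
Qed.

Lemma dual_pair_nat p v :
  P p -> lattice_face Z setT v -> pairQ (toQ p) (toQ v) \is a Num.nat.
Proof. by move=> Pp v_in; rewrite natrEint pairQ_lattice_int Pp. Qed.

Lemma dual_latticeD p q : P p -> P q -> P (p + q).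
Proof.
by move=> /dualP Pp /dualP Pq; apply/dualP => j; rewrite raddfD /= pairQDl addr_ge0.
Qed.

Definition ray_eval p j := Num.truncn (pairQ (toQ p) (row j (ratmx Z))).

Lemma ray_evalE p j : P p -> (ray_eval p j)%:R = pairQ (toQ p) (row j (ratmx Z)).
Proof.
by move=> Pp; apply: truncnK; rewrite -toQ_row; apply: dual_pair_nat (row_in_face j).
Qed.

Lemma ray_eval_hom : hom_on P ray_eval.
Proof.
split=> [i|p q Pp Pq i]; first by rewrite /ray_eval raddf0 pairQ0l truncn0.
have Ppq := dual_latticeD Pp Pq.
by apply/eqP; rewrite -(eqr_nat rat) natrD !ray_evalE // raddfD pairQDl.
Qed.

Lemma ray_eval_inj : inj_on P ray_eval.
Proof.
move=> p q Pp Pq evpq; apply/toQ_inj/pairQ_rows_inj => j.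
by rewrite -!ray_evalE ?evpq.
Qed.

Lemma ray_eval_close : close_on P ray_eval.
Proof.
move=> x; have [m mE] := pairQ_rows_surj (fun j => (x j)%:R).
have [k k_gt0 [p pE]] := lattice_multiple m.
have pairE j : pairQ (toQ p) (row j (ratmx Z)) = (k * x j)%:R.
  by rewrite pE pairQZl mE natrM.
have Pp : P p by apply/dualP => j; rewrite pairE.
exists k; split=> //; exists p; split=> // i.
by apply/eqP; rewrite -(eqr_nat rat) ray_evalE ?pairE.
Qed.

Lemma dual_lattice_sub u : exists p q, [/\ P p, P q & u = p - q].
Proof.
have [m mE] := pairQ_rows_surj (fun j => `|pairQ (toQ u) (row j (ratmx Z))|).
have [k k_gt0 [w wE]] := lattice_multiple m.
have pair_w j :
    pairQ (toQ w) (row j (ratmx Z)) = k%:R * `|pairQ (toQ u) (row j (ratmx Z))|.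
  by rewrite wE pairQZl mE.
have Pw : P w by apply/dualP => j; rewrite pair_w mulr_ge0.
exists (u + w), w; split=> //; last by rewrite addrK.
apply/dualP => j; rewrite raddfD /= pairQDl pair_w.
have k_ge1 : 1 <= k%:R :> rat by rewrite ler1n.
have := ler_peMl (normr_ge0 (pairQ (toQ u) (row j (ratmx Z)))) k_ge1.
by have := ler_norm (- pairQ (toQ u) (row j (ratmx Z))); rewrite normrN; lra.
Qed.

(* zeta_j / a pairs integrally with P - P, the whole lattice, so it is a lattice
   point and primitivity of zeta_j gives a <= 1. *)
Lemma dual_pairing_scale_one j (c : 'rV[int]_d -> nat) (a : nat) :
  first_lattice_pt (row j Z) -> (0 < a)%N ->
  (forall p, P p -> pairQ (toQ p) (row j (ratmx Z)) = (c p * a)%:R) -> a = 1%N.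
Proof.
move=> [_ zj_first] a_gt0 pairE.
have a_neq0 : a%:R != 0 :> rat by rewrite pnatr_eq0 -lt0n.
have [w wE] : exists w, toQ w = a%:R^-1 *: row j (ratmx Z).
  apply: lattice_of_int_pairing => u; have [p [q [Pp Pq ->]]] := dual_lattice_sub u.
  rewrite pairQZr raddfB pairQBl !pairE // !natrM -mulrBl mulrC mulfK //.
  by rewrite rpredB ?natr_int.
have := zj_first a%:R^-1; rewrite invr_gt0 ltr0n toQ_row invf_ge1 ?ltr0n // lern1.
by move=> /(_ a_gt0 (ex_intro _ w wE)) a_le1; apply/eqP; rewrite eqn_leq a_le1.
Qed.

Lemma free_res_dual_pairing (r : 'rV[int]_d -> 'I_d -> nat) (rho : 'I_d -> 'I_d) :
  (forall i, first_lattice_pt (row i Z)) -> min_free_res P r ->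
  (forall i, corr_ray Z P r i (rho i)) ->
  exists s : {perm 'I_d}, rho =1 s /\
    forall p, P p -> forall i, pairQ (toQ p) (row (rho i) (ratmx Z)) = (r p i)%:R.
Proof.
move=> Zprim [_ [_ [_ r_univ]]] rhoP.
have [phi [[phi0 phiD] [eval_phi _]]] := r_univ _ ray_eval_hom ray_eval_inj ray_eval_close.
pose a j k := phi (fun l => (l == k : nat)) j.
have pairE p j : P p -> pairQ (toQ p) (row j (ratmx Z)) = \sum_k (r p k)%:R * (a j k)%:R.
  have phiE (y : 'I_d -> nat) : (phi y j)%:R = \sum_k (a j k)%:R *+ y k :> rat.
    apply: (additive_natfunE (f := fun y => (phi y j)%:R)) => [|y1 y2].
      by rewrite phi0.
    by rewrite phiD natrD.
  move=> Pp; rewrite -ray_evalE // eval_phi // phiE.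
  by apply: eq_bigr => k _; rewrite mulr_natl.
have [s a_supp] : exists s : {perm 'I_d}, forall j k, ((a j k)%:R != 0 :> rat) = (k == s j).
  apply: monomial_of_nonneg_cone => [j k|j]; first exact: ler0n.
  have [c [c_gt0 [q [Pq evq]]]] := ray_eval_close (fun l => (l == j : nat)).
  exists (fun k => (r q k)%:R), c%:R; first by rewrite ltr0n.
  by split=> [k|l]; rewrite ?ler0n // -pairE // -ray_evalE // evq natrM.
have pair_s p j : P p -> pairQ (toQ p) (row j (ratmx Z)) = (r p (s j) * a j (s j))%:R.
  move=> Pp; rewrite pairE // (bigD1 (s j)) //= big1 ?addr0 ?natrM // => k ksj.
  by have := a_supp j k; rewrite (negbTE ksj) => /negbFE/eqP ->; rewrite mulr0.
have a1 j : a j (s j) = 1%N.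
  apply: (dual_pairing_scale_one (c := fun p => r p (s j)) (Zprim j)) => [|p Pp].
    by rewrite lt0n -(pnatr_eq0 rat) a_supp.
  exact: pair_s.
have rho_s i : rho i = (s^-1)%g i.
  symmetry; apply: (rhoP i).2 => m Pm k k_gt0 rmE.
  by rewrite toQ_row pair_s // a1 muln1 permKV rmE eqxx muln1 ltr0n.
exists (s^-1)%g; split=> // p Pp i.
by rewrite rho_s pair_s // a1 muln1 permKV.
Qed.

End Cone.

Section Stacky.
Variables (d : nat) (Z : 'M[int]_d) (S0 : 'rV[int]_d -> Prop) (n : 'I_d -> nat).
Hypothesis Zprim : forall i, first_lattice_pt (row i Z).
Hypothesis levels : is_level Z S0 n.

(* Primitivity makes b a natural number t; then t divides n j, and t >= n j by
   minimality of the level. *)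
Lemma level_generator j g (c : nat) (b : rat) :
  S0 g -> 0 < b -> toQ g = b *: row j (ratmx Z) -> (n j)%:R = c%:R * b -> b = (n j)%:R.
Proof.
move=> S0g b_gt0 gE njE; rewrite -toQ_row in gE.
have /natrP[t bt] := first_lattice_pt_nat (Zprim j) b_gt0 gE.
have [nj_gt0 [_ nj_min]] := levels j.
have t_gt0 : (0 < t)%N by rewrite -(ltr0n rat) -bt.
have njE' : n j = (c * t)%N by apply/eqP; rewrite -(eqr_nat rat) natrM -bt njE.
rewrite bt; congr _%:R; apply/eqP; rewrite eqn_leq; apply/andP; split.
  by rewrite njE' leq_pmull // lt0n; apply: contraTneq nj_gt0 => c0; rewrite njE' c0.
rewrite leqNgt; apply/negP => t_lt_nj; apply: (nj_min t t_gt0 t_lt_nj).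
by have -> : row j Z *+ t = g by apply: toQ_inj; rewrite toQMn gE bt.
Qed.

Hypothesis Zfree : simplicial_full Z.
Hypothesis S0_stacky : stacky_cone Z S0.

Lemma stacky_span v : S0 v -> exists x : 'I_d -> nat,
  toQ v = \sum_j (x j * n j)%:R *: row j (ratmx Z).
Proof.
have [S0_cone /(_ setT) [_ [_ [+ _]]]] := S0_stacky.
rewrite cardsT card_ord => -[f [fD [_ fS0]]] S0v.
have f0 : f (fun _ => 0%N) = 0.
  by apply: (addrI (f (fun _ => 0%N))); rewrite addr0 -fD.
pose g k := f (fun l => (l == k : nat)).
have fE x : toQ (f x) = \sum_k (x k)%:R *: toQ (g k).
  by rewrite (additive_natfunE f0 fD x) raddf_sum /=; apply: eq_bigr => k _; rewrite toQMn.
have S0g k : lattice_face Z setT (g k) /\ S0 (g k).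
  by apply/fS0; exists (fun l => (l == k : nat)).
pose b l k := ray_coord Z (toQ (g k)) l.
have coef_f x l : ray_coord Z (toQ (f x)) l = \sum_k (x k)%:R * b l k.
  by rewrite fE ray_coord_lin.
have level_f j : exists x, toQ (f x) = (n j)%:R *: row j (ratmx Z).
  have [_ [S0nj _]] := levels j.
  have [x fx] := (fS0 _).1 (conj (S0_cone _ S0nj) S0nj).
  by exists x; rewrite fx toQMn toQ_row.
have [s b_supp] : exists s : {perm 'I_d}, forall l k, (b l k != 0) = (k == s l).
  apply: monomial_of_nonneg_cone => [l k|j]; first exact: in_face_ray_coord (S0g k).1 l.
  have [x fx] := level_f j; exists (fun k => (x k)%:R), (n j)%:R.
    by rewrite ltr0n; case: (levels j).
  by split=> [k|l]; rewrite ?ler0n // -coef_f fx ray_coordZ ray_coord_row.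
have b_off l k : k != s l -> b l k = 0 by rewrite -b_supp => /negbNE/eqP.
have g_ray j : toQ (g (s j)) = b j (s j) *: row j (ratmx Z).
  rewrite {1}(ray_coordK Zfree (toQ (g (s j)))) (bigD1 j) //= big1 ?addr0 // => l lj.
  by rewrite [ray_coord _ _ _]b_off ?scale0r // (inj_eq perm_inj) eq_sym.
have g_level j : toQ (g (s j)) = (n j)%:R *: row j (ratmx Z).
  have [x fx] := level_f j.
  have := congr1 (fun y => ray_coord Z y j) fx.
  rewrite /= coef_f ray_coordZ (ray_coord_row Zfree) eqxx mulr1.
  rewrite (bigD1 (s j)) //= big1 ?addr0 => [njE|k ksj]; last by rewrite b_off ?mulr0.
  rewrite g_ray; congr (_ *: _); apply: (level_generator (c := x (s j)) (S0g (s j)).2).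
  - by rewrite lt0r b_supp eqxx /=; exact: (in_face_ray_coord Zfree (S0g (s j)).1 j).
  - exact: g_ray.
  - by rewrite -njE.
have [x <-] := (fS0 v).1 (conj (S0_cone v S0v) S0v).
exists (fun j => x (s j)); rewrite fE (reindex_inj (@perm_inj _ s)) /=.
by apply: eq_bigr => j _; rewrite g_level scalerA natrM mulrC.
Qed.

Lemma target_levelsP m :
  target S0 m <-> forall j, pairQ m ((n j)%:R *: row j (ratmx Z)) \is a Num.nat.
Proof.
split=> [m_target j|m_nat v /stacky_span [x ->]]; apply/natrP.
  by have [_ [/m_target [z mz] _]] := levels j; exists z; rewrite -mz toQMn toQ_row.
rewrite pairQ_sumr rpred_sum // => j _.
by rewrite natrM -mulrA -pairQZr rpredM ?natr_nat.
Qed.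

End Stacky.

Theorem lemma3p3 (d : nat) (Z : 'M[int]_d) (S0 : 'rV[int]_d -> Prop)
  (n : 'I_d -> nat) (r : 'rV[int]_d -> 'I_d -> nat) (rho : 'I_d -> 'I_d) :
  simplicial_full Z ->
  (forall i, first_lattice_pt (row i Z)) ->
  stacky_cone Z S0 ->
  is_level Z S0 n ->
  min_free_res (dual_lattice Z) r ->
  (forall i, corr_ray Z (dual_lattice Z) r i (rho i)) ->
  exists psi : 'rV[rat]_d -> 'I_d -> nat,
    (forall p, dual_lattice Z p -> target S0 (toQ p)) /\
    (forall m1 m2, target S0 m1 -> target S0 m2 ->
       forall i, psi (m1 + m2)%R i = (psi m1 i + psi m2 i)%N) /\
    (forall m1 m2, target S0 m1 -> target S0 m2 ->
       (forall i, psi m1 i = psi m2 i) -> m1 = m2) /\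
    (forall x : 'I_d -> nat, exists m, target S0 m /\ forall i, psi m i = x i) /\
    (forall p, dual_lattice Z p -> forall i, psi (toQ p) i = (n (rho i) * r p i)%N).
Proof.
move=> Zfree Zprim S0_stacky levels r_res rhoP.
have [s [rho_s pair_r]] := free_res_dual_pairing Zfree Zprim r_res rhoP.
have targetP := target_levelsP Zprim levels Zfree S0_stacky.
have n_neq0 j : (n j)%:R != 0 :> rat by rewrite pnatr_eq0 -lt0n; case: (levels j).
pose w j := (n j)%:R *: row j (ratmx Z).
exists (fun m i => Num.truncn (pairQ m (w (rho i)))); split; [|split; [|split; [|split]]].
- by move=> p Pp v S0v; apply/natrP; apply: dual_pair_nat Pp (S0_stacky.1 v S0v).
- move=> m1 m2 /targetP m1_nat /targetP m2_nat i.
  by rewrite pairQDl truncnD ?m1_nat // nnegrE natr_ge0 ?m2_nat.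
- move=> m1 m2 /targetP m1_nat /targetP m2_nat psi12; apply: (pairQ_rows_inj Zfree) => j.
  have := congr1 (fun t => t%:R : rat) (psi12 ((s^-1)%g j)).
  by rewrite /= rho_s permKV !truncnK ?m1_nat ?m2_nat // !pairQZr => /mulfI; apply.
- move=> x.
  have [m mE] := pairQ_rows_surj Zfree (fun j => (x ((s^-1)%g j))%:R / (n j)%:R).
  have mw j : pairQ m (w j) = (x ((s^-1)%g j))%:R by rewrite pairQZr mE mulrC divfK.
  exists m; split=> [|i]; first by apply/targetP => j; rewrite mw.
  by rewrite rho_s mw permK natrK.
- by move=> p Pp i; rewrite pairQZr pair_r // -natrM natrK.
Qed.
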